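(* Let $G$ be a scheduling game on $m\ge2$ identical machines of speed $1$ with a global priority list, in which every job $i$ has negative deterioration $p_i(t)=\max\{\tau_i,b_i-a_it\}$ with $0\le a_i\le1$ (all jobs delay-averse). Then every pure Nash equilibrium $\sigma$ of $G$ satisfies $C_{\max}(\sigma)\le\left(3-\frac2m\right)OPT(G)$; i.e., $PoA({\cal G}^{-DA}_{PGlobal})\le 3-\frac2m$.
   Context: Scheduling game: a finite set $N$ of $n$ jobs (players) and a set $M$ of $m$ machines; machine $j$ has speed $s_j>0$. With a global priority list, all machines share the same bijection $\pi:N\to\{1,\dots,n\}$, and job $u$ has higher priority than $v$ iff $\pi(u)<\pi(v)$. Negative deterioration: $p_i(t)=\max\{\tau_i,b_i-a_it\}$ with $b_i,a_i\ge0$, $\tau_i>0$. A profile $\sigma\in M^N$ assigns each job to a machine. On machine $j$, the jobs assigned to it, listed in increasing $\pi$-order as $i_1,i_2,\dots$, are processed without idle time: $S_{i_1}(\sigma)=0$, $C_{i_k}(\sigma)=S_{i_k}(\sigma)+p_{i_k}(S_{i_k}(\sigma))/s_j$, $S_{i_{k+1}}(\sigma)=C_{i_k}(\sigma)$. The cost of job $i$ is $C_i(\sigma)$. A pure Nash equilibrium (NE) is a profile in which no job can strictly decrease its completion time by unilaterally changing its machine. Makespan $C_{\max}(\sigma)=\max_iC_i(\sigma)$; $OPT(G)=\min_\sigma C_{\max}(\sigma)$ over all profiles. ${\cal G}^{-DA}_{PGlobal}$ denotes the class of all games described in the claim; its PoA is the supremum over its games of $\max_{\sigma\text{ NE}}C_{\max}(\sigma)/OPT(G)$.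 *)

From mathcomp Require Import all_boot all_order all_algebra.
From mathcomp Require Import perm.
Set Implicit Arguments. Unset Strict Implicit. Unset Printing Implicit Defensive.
Import Order.TTheory GRing.Theory Num.Theory.
Local Open Scope ring_scope.

Section Sched.
Variables (R : realFieldType) (n m : nat).
Variables (tau b a : 'I_n -> R) (speed : 'I_m -> R) (pi : {perm 'I_n}).

Definition ptime (i : 'I_n) (t : R) : R := Num.max (tau i) (b i - a i * t).

Definition profile := 'I_n -> 'I_m.

Definition jobs_on (s : profile) (j : 'I_m) : seq 'I_n :=
  sort (fun u v => (pi u <= pi v)%N) [seq k <- enum 'I_n | s k == j].

Definition finish (sp : R) (l : seq 'I_n) : R :=
  foldl (fun t k => t + ptime k t / sp) 0 l.

Definition completion (s : profile) (i : 'I_n) : R :=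
  let L := jobs_on s (s i) in finish (speed (s i)) (take (index i L).+1 L).

Definition makespan (s : profile) : R :=
  \big[Num.max/0]_(i < n) completion s i.

Definition deviate (s : profile) (i : 'I_n) (j : 'I_m) : profile :=
  fun k => if k == i then j else s k.

Definition is_NE (s : profile) : Prop :=
  forall (i : 'I_n) (j : 'I_m), completion s i <= completion (deviate s i j) i.

End Sched.

From mathcomp Require Import all_boot all_order all_algebra.
From mathcomp Require Import perm ring lra.
Import Order.TTheory GRing.Theory Num.Theory.
Set Implicit Arguments. Unset Strict Implicit. Unset Printing Implicit Defensive.
Local Open Scope ring_scope.

(* An equilibrium [s] and an arbitrary profile [s'] process the jobs in the
   same global priority order, so one can follow the machine loads [N] (in
   [s]) and [P] (in [s']) after the first [r] jobs.
   With [th = max_j P j <= OPT], the potential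
   [\sum_j (N j - th)^+ + th - \sum_j P j] stays nonpositive: appending a job
   to both schedules changes it by a nonpositive amount, because for
   [0 <= a_i <= 1] the map [t |-> t + p_i(t)] is nondecreasing while its
   increment [p_i(t)] is nonincreasing.  For the last job [k] of [s], the
   equilibrium condition bounds [C_k] by [k]'s completion time when started
   at the least loaded machine [T = min_j N j]; the potential gives
   [T - P (s' k) <= (2 - 2/m) OPT], and starting [k] at [P (s' k)] instead
   finishes by [OPT]. *)

Section PriorityOrder.
Variables (n m : nat) (pi : {perm 'I_n}).

Definition prio_le : rel 'I_n := fun u v => (pi u <= pi v)%N.

Lemma prio_le_trans : transitive prio_le.
Proof. by move=> x y z; apply: leq_trans. Qed.

Lemma prio_le_total : total prio_le.
Proof. by move=> x y; rewrite /prio_le leq_total. Qed.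

Lemma prio_le_anti : antisymmetric prio_le.
Proof.
move=> x y /andP[xy yx]; apply: (perm_inj (s := pi)); apply: val_inj.
by apply/eqP; rewrite eqn_leq; apply/andP.
Qed.

Definition jobs_before (s : profile n m) (j : 'I_m) (r : nat) : seq 'I_n :=
  sort prio_le [seq u <- enum 'I_n | (s u == j) && (pi u < r)%N].

Lemma jobs_before_uniq s j r : uniq (jobs_before s j r).
Proof. by rewrite sort_uniq filter_uniq // enum_uniq. Qed.

Lemma mem_jobs_before s j r u :
  (u \in jobs_before s j r) = (s u == j) && (pi u < r)%N.
Proof. by rewrite mem_sort mem_filter mem_enum andbT. Qed.

Lemma jobs_before_sorted s j r : sorted prio_le (jobs_before s j r).
Proof. exact: (sort_sorted prio_le_total). Qed.

Lemma jobs_before0 s j : jobs_before s j 0 = [::].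
Proof.
rewrite /jobs_before (@eq_filter _ _ pred0) ?filter_pred0 // => u.
by rewrite ltn0 andbF.
Qed.

Lemma jobs_before_rank_succ s j i :
  jobs_before s j (pi i).+1 =
  if s i == j then rcons (jobs_before s j (pi i)) i else jobs_before s j (pi i).
Proof.
apply: (sorted_eq prio_le_trans prio_le_anti); first exact: jobs_before_sorted.
  case: ifP => _; last exact: jobs_before_sorted.
  rewrite (sorted_pairwise prio_le_trans) -cats1 pairwise_cat.
  rewrite -(sorted_pairwise prio_le_trans) jobs_before_sorted /= andbT allrel1r.
  by apply/allP => u; rewrite mem_jobs_before => /andP[_ /ltnW].
apply: uniq_perm; first exact: jobs_before_uniq.
  case: ifP => _; last exact: jobs_before_uniq.
  by rewrite rcons_uniq mem_jobs_before ltnn andbF jobs_before_uniq.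
move=> u; rewrite mem_jobs_before ltnS leq_eqVlt.
have rank_eq : ((pi u : nat) == pi i) = (u == i).
  by rewrite val_eqE (inj_eq perm_inj).
by case: ifP => sij; rewrite ?mem_rcons ?in_cons mem_jobs_before rank_eq;
  case: (eqVneq u i) => [->|]; rewrite ?sij.
Qed.

Lemma jobs_on_jobs_before s j : jobs_on pi s j = jobs_before s j n.
Proof.
by congr sort; apply: eq_filter => u; rewrite ltn_ord andbT.
Qed.

Lemma take_index_sorted (L : seq 'I_n) i :
  sorted prio_le L -> uniq L -> i \in L ->
  take (index i L).+1 L = [seq u <- L | prio_le u i].
Proof.
elim: L => [//|x L IH] /= sxL /andP[xL uL].
have [sL allx] : sorted prio_le L /\ all (prio_le x) L.
  by move: sxL; rewrite (path_sortedE prio_le_trans) => /andP[].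
case: eqVneq => [<- _|ix]; last first.
  rewrite in_cons eq_sym (negbTE ix) /= => iL.
  by rewrite (allP allx i iL) IH.
rewrite /prio_le leqnn take0 (@eq_in_filter _ _ pred0) ?filter_pred0 // => u u_in.
apply/negbTE; rewrite -ltnNge ltn_neqAle [(_ <= _)%N](allP allx u u_in) andbT.
by apply: contraNN xL => /eqP/val_inj/perm_inj ->.
Qed.

Lemma take_completed_jobs s i :
  let L := jobs_on pi s (s i) in
  take (index i L).+1 L = rcons (jobs_before s (s i) (pi i)) i.
Proof.
rewrite /= jobs_on_jobs_before take_index_sorted ?jobs_before_sorted
  ?jobs_before_uniq ?mem_jobs_before ?eqxx ?ltn_ord //.
rewrite /jobs_before filter_sort; [|exact: prio_le_total|exact: prio_le_trans].
rewrite -filter_predI; have := jobs_before_rank_succ s (s i) i; rewrite eqxx => <-.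
by congr sort; apply: eq_filter => u /=; rewrite ltn_ord ltnS andbT andbC.
Qed.

Lemma jobs_before_deviate s k j' j :
  jobs_before (deviate s k j') j (pi k) = jobs_before s j (pi k).
Proof.
congr sort; apply: eq_filter => u; rewrite /deviate.
by case: (eqVneq u k) => [->|//]; rewrite ltnn !andbF.
Qed.

End PriorityOrder.

Section Potential.
Variables (R : realFieldType) (m : nat).

Definition maxload (P : 'I_m -> R) : R := \big[Num.max/0]_j P j.

Definition potential (N P : 'I_m -> R) : R :=
  \sum_j Num.max (N j - maxload P) 0 + maxload P - \sum_j P j.

(* One job is appended: in the first schedule to a machine of load [x],
   finishing at [gx]; in the second to a machine of load [p], finishing at
   [gp], which moves the maximal load from [th] to [th']. *)
Lemma excess_step_le (x gx p gp th th' : R) :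
  th <= th' -> th' <= Num.max th gp -> gp <= th' -> p <= th -> p <= gp ->
  x <= gx -> (p <= x -> gx - x <= gp - p) -> (x <= p -> gx <= gp) ->
  Num.max (gx - th') 0 - Num.max (x - th) 0 + th' - th - (gp - p) <= 0.
Proof.
move=> + + + + + + lip mono; rewrite !maxEle.
by case: (lerP p x) => [/lip|/ltW/mono]; do 3 case: ifP; lra.
Qed.

Lemma maxload_update (P P' : 'I_m -> R) j0 :
  (forall j, j != j0 -> P' j = P j) -> P j0 <= P' j0 ->
  [/\ maxload P <= maxload P', maxload P' <= Num.max (maxload P) (P' j0)
    & P' j0 <= maxload P'].
Proof.
move=> P'E le_j0; split; last exact: le_bigmax.
- apply: bigmax_le => [|j _]; first exact: bigmax_ge_id.
  apply: le_trans (le_bigmax _ _ j) => /=.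
  by case: (eqVneq j j0) => [->|/P'E->].
- apply: bigmax_le => [|j _]; first by rewrite le_max bigmax_ge_id.
  case: (eqVneq j j0) => [->|/P'E->]; first by rewrite le_max lexx orbT.
  by rewrite le_max le_bigmax.
Qed.

Lemma potential_step (N N' P P' : 'I_m -> R) i0 j0 :
  (forall j, j != i0 -> N' j = N j) -> (forall j, j != j0 -> P' j = P j) ->
  P j0 <= P' j0 -> N i0 <= N' i0 ->
  (P j0 <= N i0 -> N' i0 - N i0 <= P' j0 - P j0) ->
  (N i0 <= P j0 -> N' i0 <= P' j0) ->
  potential N' P' <= potential N P.
Proof.
move=> N'E P'E leP leN lip mono.
have [max_le max_ge j0_le] := maxload_update P'E leP.
have := excess_step_le max_le max_ge j0_le (le_bigmax _ P j0) leP leN lip mono.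
have others_le : \sum_(j | j != i0) Num.max (N' j - maxload P') 0 <=
                 \sum_(j | j != i0) Num.max (N j - maxload P) 0.
  apply: ler_sum => j /N'E->; rewrite !maxEle.
  by do 2 case: ifP; lra.
have others_eq : \sum_(j | j != j0) P' j = \sum_(j | j != j0) P j.
  by apply: eq_bigr => j /P'E.
rewrite /potential (bigD1 i0 _ (F := fun j => Num.max (N' j - _) 0)) //=.
rewrite (bigD1 i0 _ (F := fun j => Num.max (N j - _) 0)) //=.
rewrite (bigD1 j0 _ (F := P')) // (bigD1 j0 _ (F := P)) //= others_eq; lra.
Qed.

Lemma potential0 (N P : 'I_m -> R) :
  (forall j, N j = 0) -> (forall j, P j = 0) -> potential N P = 0.
Proof.
move=> N0 P0; have maxload0 : maxload P = 0.
  by apply/le_anti; rewrite bigmax_ge_id andbT; apply: bigmax_le => // j _; rewrite P0.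
rewrite /potential maxload0 !big1 => [|j _|j _]; rewrite ?P0 ?N0 ?subr0 ?maxxx //.
lra.
Qed.

Lemma potential_min_excess (N P : 'I_m -> R) (O : R) i0 j0 :
  (2 <= m)%N -> (forall j, 0 <= P j <= O) -> potential N P <= 0 ->
  (forall j, N i0 <= N j) ->
  Num.max (N i0 - P j0) 0 <= (2 - 2 / m%:R) * O.
Proof.
move=> m_ge2 P_bd pot_le N_min.
set w : R := m%:R; set th := maxload P; set T := N i0; set L := P j0.
have w_ge2 : 2 <= w by rewrite (ler_nat R 2 m).
have /andP[L_ge0 L_le] : 0 <= L <= O := P_bd j0.
have th_le : th <= O by apply: bigmax_le => [|j _]; [lra | case/andP: (P_bd j)].
have L_le_th : L <= th by apply: le_bigmax.
have sum_const x : \sum_(j < m) x = w * x by rewrite sumr_const card_ord mulr_natl.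
have excess_sum : w * Num.max (T - th) 0 <= \sum_j Num.max (N j - th) 0.
  rewrite -sum_const; apply: ler_sum => j _.
  by rewrite !maxEle; have := N_min j; rewrite -/T; do 2 case: ifP; lra.
have load_sum : \sum_j P j + th <= w * th + L.
  rewrite -sum_const [\sum_j P j](bigD1 j0) // [\sum_j th](bigD1 j0) //= -/L.
  have : \sum_(j | j != j0) P j <= \sum_(j | j != j0) th.
    by apply: ler_sum => j _; apply: le_bigmax.
  lra.
have O_ge0 : 0 <= O by lra.
suff scaled : (T - L) * w <= (2 * w - 2) * O.
  have -> : (2 - 2 / w) * O = (2 * w - 2) * O / w by field; lra.
  rewrite ge_max ler_pdivlMr ?scaled /=; last lra.
  by apply: divr_ge0; [apply: mulr_ge0|]; lra.
have wL_ge0 : 0 <= (w - 1) * L by apply: mulr_ge0; lra.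
have wO_ge : 0 <= (2 * w - 2) * (O - th) by apply: mulr_ge0; lra.
have wO_ge' : 0 <= (w - 2) * O by apply: mulr_ge0; lra.
case: (lerP T th) => [T_le|th_lt].
  have : (T - L) * w <= th * w by apply: ler_wpM2r; lra.
  lra.
have excess : Num.max (T - th) 0 = T - th by rewrite maxEle; case: ifP; lra.
move: pot_le excess_sum; rewrite /potential -/th excess; lra.
Qed.

End Potential.

Section UnitSpeed.
Variables (R : realFieldType) (n m : nat) (tau b a : 'I_n -> R).
Variable (pi : {perm 'I_n}).
Hypotheses (tau_gt0 : forall i, 0 < tau i) (a_ge0 : forall i, 0 <= a i)
  (a_le1 : forall i, a i <= 1).

Definition endtime (i : 'I_n) (t : R) : R := t + ptime tau b a i t.

Lemma endtime_ge i t : t <= endtime i t.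
Proof.
by rewrite /endtime lerDl (le_trans (ltW (tau_gt0 i))) // le_max lexx.
Qed.

Lemma endtime_increment_nonincr i x y :
  x <= y -> endtime i y - y <= endtime i x - x.
Proof.
move=> xy; rewrite /endtime /ptime !maxEle.
by have := ler_wpM2l (a_ge0 i) xy; do 2 case: ifP; lra.
Qed.

Lemma endtime_mono i x y : x <= y -> endtime i x <= endtime i y.
Proof.
move=> xy; rewrite /endtime /ptime !maxEle.
have : (1 - a i) * x <= (1 - a i) * y by apply: ler_wpM2l; have := a_le1 i; lra.
by do 2 case: ifP; lra.
Qed.

Lemma endtime_shift_le i x y :
  endtime i x <= endtime i y + Num.max (x - y) 0.
Proof.
rewrite maxEle; case: ifP => [|/negbT]; rewrite ?subr_le0 -?ltNge ?subr_gt0.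
  by rewrite addr0; apply: endtime_mono.
by move/ltW/(endtime_increment_nonincr i); lra.
Qed.

Definition load_before (s : profile n m) (j : 'I_m) (r : nat) : R :=
  finish tau b a 1 (jobs_before pi s j r).

Lemma finish1_rcons l i :
  finish tau b a 1 (rcons l i) = endtime i (finish tau b a 1 l).
Proof. by rewrite /finish foldl_rcons divr1. Qed.

Lemma load_before_rank_succ s j i :
  load_before s j (pi i).+1 =
  if s i == j then endtime i (load_before s j (pi i)) else load_before s j (pi i).
Proof.
by rewrite /load_before jobs_before_rank_succ; case: ifP => // _; apply: finish1_rcons.
Qed.

Lemma completion_unit_speed s i :
  completion tau b a (fun=> 1) pi s i = endtime i (load_before s (s i) (pi i)).
Proof. by rewrite /completion take_completed_jobs finish1_rcons. Qed.

Lemma load_before0 s j : load_before s j 0 = 0.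
Proof. by rewrite /load_before jobs_before0. Qed.

Lemma load_before_invariant (s s' : profile n m) r : (r <= n)%N ->
  (forall j, 0 <= load_before s' j r <= makespan tau b a (fun=> 1) pi s') /\
  potential (fun j => load_before s j r) (fun j => load_before s' j r) <= 0.
Proof.
elim: r => [_|r IH r_lt].
  split=> [j|]; first by rewrite load_before0 lexx bigmax_ge_id.
  by rewrite potential0 // => j; rewrite load_before0.
have [i i_rank] : exists i, pi i = r :> nat.
  by exists ((pi^-1)%g (Ordinal r_lt)); rewrite permKV.
subst r.
have [P_bd pot_le] := IH (ltnW r_lt).
have load_other s0 j :
    j != s0 i -> load_before s0 j (pi i).+1 = load_before s0 j (pi i).
  by move=> ji; rewrite load_before_rank_succ eq_sym (negbTE ji).
have load_here s0 :
    load_before s0 (s0 i) (pi i).+1 = endtime i (load_before s0 (s0 i) (pi i)).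
  by rewrite load_before_rank_succ eqxx.
split=> [j|].
  case: (eqVneq j (s' i)) => [->|/load_other->]; last exact: P_bd.
  have /andP[ge0 _] := P_bd (s' i).
  rewrite load_here -completion_unit_speed le_bigmax andbT completion_unit_speed.
  exact: le_trans ge0 (endtime_ge _ _).
apply: le_trans pot_le; apply: (potential_step (i0 := s i) (j0 := s' i)) => /=.
- exact: load_other.
- exact: load_other.
- by rewrite load_here endtime_ge.
- by rewrite load_here endtime_ge.
- by rewrite !load_here => /endtime_increment_nonincr.
- by rewrite !load_here => /endtime_mono.
Qed.

Lemma equilibrium_completion_le (s s' : profile n m) k :
  (2 <= m)%N -> is_NE tau b a (fun=> 1) pi s ->
  completion tau b a (fun=> 1) pi s k
    <= (3 - 2 / m%:R) * makespan tau b a (fun=> 1) pi s'.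
Proof.
move=> m_ge2 s_NE.
set N := fun j => load_before s j (pi k); set P := fun j => load_before s' j (pi k).
have [P_bd pot_le] := load_before_invariant s s' (ltnW (ltn_ord (pi k))).
have [j0 _ N_min] := @arg_minP _ _ _ (Ordinal (ltnW m_ge2)) xpredT N isT.
have NE_bound : completion tau b a (fun=> 1) pi s k <= endtime k (N j0).
  apply: le_trans (s_NE k j0) _.
  rewrite completion_unit_speed /deviate eqxx -/(deviate s k j0).
  by rewrite /load_before jobs_before_deviate.
have opt_bound : endtime k (P (s' k)) <= makespan tau b a (fun=> 1) pi s'.
  by rewrite /P -completion_unit_speed; apply: le_bigmax.
have := potential_min_excess (s' k) m_ge2 P_bd pot_le (fun j => N_min j isT).
have := endtime_shift_le k (N j0) (P (s' k)).
lra.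
Qed.

End UnitSpeed.

Theorem theorem14 (R : realFieldType) (n m : nat) (hm : (2 <= m)%N)
  (tau b a : 'I_n -> R) (pi : {perm 'I_n})
  (htau : forall i, 0 < tau i) (hb : forall i, 0 <= b i)
  (ha0 : forall i, 0 <= a i) (ha1 : forall i, a i <= 1)
  (sigma : profile n m)
  (hNE : is_NE tau b a (fun _ : 'I_m => 1) pi sigma) :
  forall sigma' : profile n m,
    makespan tau b a (fun _ : 'I_m => 1) pi sigma
    <= (3 - 2 / m%:R) * makespan tau b a (fun _ : 'I_m => 1) pi sigma'.
Proof.
move=> sigma'; apply: bigmax_le => [|k _]; last first.
  exact: equilibrium_completion_le.
apply: mulr_ge0; last exact: bigmax_ge_id.
have : 2 / m%:R <= 1 :> R by rewrite ler_pdivrMr ?ltr0n ?mul1r ?ler_nat // ltnW.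
lra.
Qed.
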